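(* Let $n\ge 2$. The function $\mathbf{H}:[0,1]^n\to[0,1]$ has no neutral element, i.e. there is no $e\in[0,1]$ such that $\mathbf{H}(e,\dots,e,t,e,\dots,e)=t$ for every $t\in[0,1]$ placed at any coordinate.
   Context: For $\mathbf{x}\in[0,1]^n$ let $x_{(1)}\ge\dots\ge x_{(n)}$ be its entries in decreasing order, and define the median $Med(\mathbf{x})=\frac12(x_{(k)}+x_{(k+1)})$ if $n=2k$ and $Med(\mathbf{x})=x_{(k+1)}$ if $n=2k+1$. Define $f_i(\mathbf{x})=\frac1n$ if $x_1=\dots=x_n$, and otherwise $f_i(\mathbf{x})=\frac{1}{n-1}\Big(1-\frac{|x_i-Med(\mathbf{x})|}{\sum_{j=1}^n|x_j-Med(\mathbf{x})|}\Big)$. Then $\mathbf{H}(\mathbf{x})=\sum_{i=1}^n f_i(\mathbf{x})\,x_i$. *)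

From mathcomp Require Import all_boot all_order all_algebra.
From mathcomp Require Import reals.
Set Implicit Arguments. Unset Strict Implicit. Unset Printing Implicit Defensive.
Import Order.TTheory GRing.Theory Num.Theory.
Local Open Scope ring_scope.

Section H.
Variable R : realType.

Definition dec_sorted (n : nat) (x : 'I_n -> R) : seq R :=
  sort (fun a b : R => b <= a) [seq x i | i <- enum 'I_n].

(* x_(j), 1-based *)
Definition ord_stat (n : nat) (x : 'I_n -> R) (j : nat) : R :=
  nth 0 (dec_sorted x) j.-1.

Definition Med (n : nat) (x : 'I_n -> R) : R :=
  if odd n then ord_stat x (n./2).+1
  else (ord_stat x n./2 + ord_stat x (n./2).+1) / 2.

Definition all_equal (n : nat) (x : 'I_n -> R) : bool :=
  [forall i, forall j, x i == x j].

Definition f_weight (n : nat) (x : 'I_n -> R) (i : 'I_n) : R :=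
  if all_equal x then n%:R^-1
  else (n.-1)%:R^-1 *
       (1 - `|x i - Med x| / (\sum_(j < n) `|x j - Med x|)).

Definition Hagg (n : nat) (x : 'I_n -> R) : R :=
  \sum_(i < n) f_weight x i * x i.

Definition in01 (t : R) : bool := (0 <= t) && (t <= 1).

End H.

From mathcomp Require Import all_boot all_order all_algebra.
From mathcomp Require Import reals ring lra.
Import Order.TTheory GRing.Theory Num.Theory.
Local Open Scope ring_scope.

(* Let x be the vector with t at one coordinate and e at the other n - 1 = N + 1
   coordinates, where t <> e, and put d = |t - Med x|, c = |e - Med x|.  The
   weights of H are explicit and give
     H(x) - t = (d + N c) (e - t) / (d + (N + 1) c).
   So H(x) = t forces d = 0 and N c = 0, i.e. t = Med x, and moreover e = Med x
   when n >= 3; for n = 2 the median is (t + e) / 2 <> t.  Any candidate neutral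
   element e therefore fails at the point t in {0, 1} different from e. *)

Section Spike.
Context {R : realType}.

Definition spike {n : nat} (k : 'I_n) (t e : R) : 'I_n -> R :=
  fun i => if i == k then t else e.

Lemma Med_ord2 (x : 'I_2 -> R) : Med x = (x ord0 + x ord_max) / 2.
Proof.
rewrite /Med /= /ord_stat /=.
have size_x : size (dec_sorted x) = 2%N.
  by rewrite /dec_sorted size_sort size_map size_enum_ord.
have : \sum_(z <- dec_sorted x) z = \sum_(z <- [seq x i | i <- enum 'I_2]) z.
  by apply: perm_big; rewrite /dec_sorted perm_sort.
rewrite big_map big_enum /= !big_ord_recl big_ord0 addr0.
case: (dec_sorted x) size_x => [|a [|b [|]]] //= _.
rewrite !big_cons big_nil addr0 => ->.
by congr (_ / 2); congr (_ + x _); apply: val_inj.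
Qed.

Lemma Med_spike_ord2 (k : 'I_2) (t e : R) : Med (spike k t e) = (t + e) / 2.
Proof. by rewrite Med_ord2 /spike; case: k => [[|[|//]]] ? /=; rewrite // addrC. Qed.

Section SpikeWeights.
Context {N : nat} (k : 'I_N.+2) {t e : R}.
Hypothesis te : t != e.

Let m : R := Med (spike k t e).
Let d : R := `|t - m|.
Let c : R := `|e - m|.

Lemma all_equal_spike : all_equal (spike k t e) = false.
Proof.
apply/negbTE/forallP => /(_ k)/forallP all_eq_k.
have [j jk] : exists j : 'I_N.+2, j != k.
  by case: (eqVneq k ord0) => [->|k0]; [exists ord_max | exists ord0; rewrite eq_sym].
by move: (all_eq_k j); rewrite /spike eqxx (negbTE jk) (negbTE te).
Qed.

Lemma sum_dist_spike (a : R) :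
  \sum_(j < N.+2) `|spike k t e j - a| = `|t - a| + N.+1%:R * `|e - a|.
Proof.
rewrite (bigD1 k) //= {1}/spike eqxx; congr (_ + _).
rewrite (eq_bigr (fun=> `|e - a|)) => [|j jk]; last by rewrite /spike (negbTE jk).
by rewrite sumr_const cardC1 card_ord mulr_natl.
Qed.

Lemma dist_spike_gt0 : 0 < d + N.+1%:R * c.
Proof.
have dist_te : 0 < `|t - e| by rewrite normr_gt0 subr_eq0.
have : `|t - e| <= d + c by rewrite /c (distrC e) ler_distD.
have : c <= N.+1%:R * c by apply: ler_peMl; rewrite ?normr_ge0 ?ler1n.
lra.
Qed.

Lemma Hagg_spike_subr :
  Hagg (spike k t e) - t = (d + N%:R * c) * (e - t) / (d + N.+1%:R * c).
Proof.
have S_neq0 := lt0r_neq0 dist_spike_gt0.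
have weightE i : f_weight (spike k t e) i =
    N.+1%:R^-1 * (1 - `|spike k t e i - m| / (d + N.+1%:R * c)).
  by rewrite /f_weight all_equal_spike sum_dist_spike.
rewrite /Hagg (bigD1 k) //= weightE {1 2}/spike eqxx -/d.
rewrite (eq_bigr (fun=> N.+1%:R^-1 * (1 - c / (d + N.+1%:R * c)) * e)); last first.
  by move=> j jk; rewrite weightE /spike (negbTE jk).
rewrite sumr_const cardC1 card_ord -mulr_natl /=.
move: S_neq0; rewrite -natr1 => S_neq0.
by field; rewrite S_neq0 natr1 pnatr_eq0.
Qed.

End SpikeWeights.

Lemma Hagg_spike_neq {N : nat} (k : 'I_N.+2) {t e : R} :
  t != e -> Hagg (spike k t e) != t.
Proof.
move=> te; rewrite -subr_eq0 Hagg_spike_subr // !mulf_eq0 invr_eq0.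
rewrite (negbTE (lt0r_neq0 (dist_spike_gt0 k te))) subr_eq0 (eq_sym e) (negbTE te) !orbF.
rewrite paddr_eq0 ?mulr_ge0 // normr_eq0 subr_eq0 mulf_eq0 normr_eq0 subr_eq0.
apply/negP => /andP[/eqP t_med].
case: N k t_med => [|N] k t_med.
  by move=> _; rewrite Med_spike_ord2 in t_med; move/eqP: te; apply; lra.
by rewrite pnatr_eq0 /= => /eqP e_med; move/eqP: te; apply; rewrite [LHS]t_med [RHS]e_med.
Qed.

End Spike.

Theorem proposition12 (R : realType) (n : nat) (hn : (2 <= n)%N) :
  ~ exists e : R, in01 e /\
      forall (k : 'I_n) (t : R), in01 t ->
        Hagg (fun i : 'I_n => if i == k then t else e) = t.
Proof.
case: n hn => [|[|N]] // _ [e [_ neutral]].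
have [t [t01 te]] : exists t : R, in01 t /\ t != e.
  have [->|e_neq0] := eqVneq e 0; [exists 1 | exists 0];
    by rewrite /in01 ?ler01 ?lexx ?oner_neq0 // eq_sym.
by have := Hagg_spike_neq (N := N) ord0 te; rewrite /spike neutral // eqxx.
Qed.
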